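(* Let $G$ be a finite graph and let $k$ be an integer with $k>\chi(G)+1$. Then $G$ is determined up to isomorphism by the Kempe-recolouring graph $\mathcal{K}_k(G)$, even without knowing the value of $k$: if $G'$ is another finite graph and $k'>\chi(G')+1$ is an integer with $\mathcal{K}_k(G)\cong\mathcal{K}_{k'}(G')$, then $G\cong G'$.
   Context: All graphs are finite and simple. A $k$-colouring of $G$ is a map $c:V(G)\to\{1,\dots,k\}$ with $c(u)\neq c(v)$ for every edge $uv$. Given a $k$-colouring $c$, two distinct colours $i,j$, and a connected component $H$ of the subgraph of $G$ induced by $c^{-1}(\{i,j\})$, the Kempe swap on $H$ produces the colouring obtained from $c$ by exchanging colours $i$ and $j$ on the vertices of $H$. The $k$-Kempe-recolouring graph $\mathcal{K}_k(G)$ has as vertices all $k$-colourings of $G$, two distinct colourings being adjacent if and only if one is obtained from the other by a single Kempe swap. (Recolouring a single vertex to a colour absent from its neighbourhood is a special case, a trivial Kempe swap.) *)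

From mathcomp Require Import all_boot.
Set Implicit Arguments. Unset Strict Implicit. Unset Printing Implicit Defensive.

Record graph := Graph {
  vert : finType;
  adj : rel vert;
  adj_sym : symmetric adj;
  adj_irr : irreflexive adj }.

Section Colourings.
Variable G : graph.
Local Notation V := (vert G).

(* proper k-colouring with colours 'I_k (i.e. {0,..,k-1} standing for {1,..,k}) *)
Definition proper (k : nat) (c : {ffun V -> 'I_k}) : bool :=
  [forall u, forall v, adj u v ==> (c u != c v)].

Definition colouring (k : nat) := {c : {ffun V -> 'I_k} | proper c}.

Definition colourable (k : nat) : bool := [exists c : {ffun V -> 'I_k}, proper c].

Lemma colourable_card : exists k, colourable k.
Proof.
exists #|V|; apply/existsP; exists [ffun v => enum_rank v].
apply/forallP=> u; apply/forallP=> v; apply/implyP=> huv; rewrite !ffunE.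
apply/negP=> /eqP /enum_rank_inj Euv; subst v.
by rewrite (@adj_irr G) in huv.
Qed.

Definition chromatic_number : nat := ex_minn colourable_card.

(* Kempe swap: colours i j, component of the subgraph induced by c^-1({i,j})
   containing the vertex v (v must have colour i or j). *)
Definition kempe_rel (k : nat) (c : {ffun V -> 'I_k}) (i j : 'I_k) : rel V :=
  fun x y => [&& adj x y, c x \in [:: i; j] & c y \in [:: i; j]].

Definition kempe_comp (k : nat) (c : {ffun V -> 'I_k}) (i j : 'I_k) (v : V)
  : {set V} := [set w | connect (kempe_rel c i j) v w].

Definition kempe_swap (k : nat) (c : {ffun V -> 'I_k}) (i j : 'I_k) (v : V)
  : {ffun V -> 'I_k} :=
  [ffun w => if w \in kempe_comp c i j v then
               (if c w == i then j else i) else c w].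

Definition kempe_step (k : nat) (c d : {ffun V -> 'I_k}) : Prop :=
  exists (i j : 'I_k) (v : V), [/\ i != j, c v \in [:: i; j] &
                                  d = kempe_swap c i j v].

Definition kempe_adj (k : nat) (c d : colouring k) : Prop :=
  c != d /\ (kempe_step (val c) (val d) \/ kempe_step (val d) (val c)).

End Colourings.

Definition kempe_graph_iso (G : graph) (k : nat) (G' : graph) (k' : nat) : Prop :=
  exists f : colouring G k -> colouring G' k',
    bijective f /\ forall c d, kempe_adj c d <-> kempe_adj (f c) (f d).

Definition graph_iso (G G' : graph) : Prop :=
  exists f : vert G -> vert G',
    bijective f /\ forall x y, adj x y = adj (f x) (f y).

(* Fix a proper colouring c0 of G leaving two colours a0, a1 unused (possible
   as k >= chi(G) + 2), and let m_v be c0 with v recoloured a0.  If three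
   colourings are pairwise Kempe-adjacent, two of them differ from the third
   at one and the same single vertex; hence an edge of K_k lies on a triangle
   iff its ends differ at a single vertex at which a third colour is free.
   The edge (c0, m_v) is of this kind (a1 is free), so its image under the
   isomorphism joins two colourings of G' differing at a single vertex phi(v).
   The map phi is injective, and it preserves adjacency: were phi(u), phi(v)
   non-adjacent, the two single-vertex changes could be combined into a
   colouring, other than the image of c0, lying on triangles with the images
   of m_u and m_v; its preimage would differ from both m_u and m_v at a single
   vertex, which forces it to be c0 when uv is an edge.  Injective
   homomorphisms in both directions between finite graphs are isomorphisms. *)

From Pilot Require Import Defs.
From mathcomp Require Import all_boot.
Set Implicit Arguments. Unset Strict Implicit. Unset Printing Implicit Defensive.

Section ColourPairs.
Variable T : eqType.
Implicit Types a b x i j p q : T.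

Lemma eq_pair_of_mem2 a b i j p q : a != b ->
  a \in [:: i; j] -> b \in [:: i; j] -> a \in [:: p; q] -> b \in [:: p; q] ->
  [:: i; j] =i [:: p; q].
Proof.
move=> ab; rewrite !inE.
by do 4![case/orP=> /eqP ?]; subst; rewrite ?eqxx in ab => // x; rewrite !inE orbC.
Qed.

Lemma pair_other_uniq a b x i j :
  a \in [:: i; j] -> b \in [:: i; j] -> x \in [:: i; j] -> a != x -> b != x ->
  a = b.
Proof. by rewrite !inE; do 3![case/orP=> /eqP ?]; subst; rewrite ?eqxx. Qed.

End ColourPairs.

Section KempeSwaps.
Variables (G : graph) (k : nat).
Local Notation V := (vert G).
Implicit Types (c d e : {ffun V -> 'I_k}) (i j p q r s : 'I_k) (u v w x y : V).

Lemma adj_neq x y : adj x y -> x != y.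
Proof. by apply: contraTneq => ->; rewrite (@adj_irr G). Qed.

Lemma neq_of_nonadj u v w : ~~ adj u v -> adj v w -> w != u.
Proof. by move=> nuv; apply: contraTneq => ->; rewrite (@adj_sym G). Qed.

Lemma proper_adj c x y : Defs.proper c -> adj x y -> c x != c y.
Proof. by move=> /forallP /(_ x) /forallP /(_ y) /implyP; apply. Qed.

Lemma kempe_rel_sym c i j : symmetric (kempe_rel c i j).
Proof. by move=> x y; rewrite /kempe_rel (@adj_sym G x y) [(c x \in _) && _]andbC. Qed.

Lemma kempe_comp_id c i j v : v \in kempe_comp c i j v.
Proof. by rewrite inE connect0. Qed.

Lemma kempe_comp_colour c i j v w :
  c v \in [:: i; j] -> w \in kempe_comp c i j v -> c w \in [:: i; j].
Proof.
move=> cv; rewrite inE => /connectP [pth].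
elim: pth v cv => [|y pth IH] v cv /=; first by move=> _ ->.
by case/andP=> /and3P [_ _ cy]; apply: IH.
Qed.

Lemma kempe_comp_eq c i j v1 v2 w : w \in kempe_comp c i j v1 ->
  w \in kempe_comp c i j v2 -> kempe_comp c i j v1 = kempe_comp c i j v2.
Proof.
rewrite !inE => h1 h2; apply/setP => x; rewrite !inE.
have sym := sym_connect_sym (kempe_rel_sym c i j).
by rewrite (same_connect sym h1) (same_connect sym h2).
Qed.

Lemma kempe_comp_neighbour c i j v w : w \in kempe_comp c i j v -> w != v ->
  exists2 y, y \in kempe_comp c i j v & adj v y.
Proof.
rewrite inE => /connectP [[|y pth]] /=; first by move=> _ ->; rewrite eqxx.
by case/andP=> vy _ _ _; exists y; [rewrite inE connect1 | case/and3P: vy].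
Qed.

Lemma eq_kempe_comp c d i j p q v :
  (forall x, (c x \in [:: i; j]) = (d x \in [:: p; q])) ->
  kempe_comp c i j v = kempe_comp d p q v.
Proof.
move=> E; apply/setP => x; rewrite !inE; apply: eq_connect => a b.
by rewrite /kempe_rel !E.
Qed.

Lemma kempe_comp_pair c i j p q v :
  [:: i; j] =i [:: p; q] -> kempe_comp c i j v = kempe_comp c p q v.
Proof. by move=> E; apply: eq_kempe_comp => x; rewrite E. Qed.

(* Unlike kempe_step, this description of a Kempe step c -> d is symmetric in
   c and d. *)
Definition kempe_swap_spec c d i j v :=
  [/\ c v \in [:: i; j],
      forall w, (c w != d w) = (w \in kempe_comp c i j v) &
      forall w, (c w \in [:: i; j]) = (d w \in [:: i; j])].

Lemma kempe_step_spec c d : kempe_step c d -> exists i j v, kempe_swap_spec c d i j v.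
Proof.
move=> [i [j [v [ij cv ->]]]]; exists i, j, v; split=> // w; rewrite ffunE.
- case: ifP => [/(kempe_comp_colour cv)|]; last by rewrite eqxx.
  by rewrite !inE; case: eqP => [->|_ /eqP ->]; rewrite // eq_sym.
- case: ifP => [/(kempe_comp_colour cv) ->|//].
  by case: eqP; rewrite !inE eqxx ?orbT.
Qed.

Lemma kempe_swap_spec_sym c d i j v :
  kempe_swap_spec c d i j v -> kempe_swap_spec d c i j v.
Proof.
case=> cv supp col; have E := eq_kempe_comp v col.
by split=> [|w|w]; rewrite -?col // eq_sym supp E.
Qed.

Lemma kempe_swap_spec_colour c d i j v w : kempe_swap_spec c d i j v ->
  c w != d w -> c w \in [:: i; j] /\ d w \in [:: i; j].
Proof.
case=> cv supp col; rewrite supp => /(kempe_comp_colour cv) cw.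
by rewrite -col.
Qed.

Lemma kempe_swap_spec_neq c d i j v : kempe_swap_spec c d i j v -> c v != d v.
Proof. by case=> _ supp _; rewrite supp kempe_comp_id. Qed.

Lemma kempe_swap_pairs_eq c d e p q r s v2 v3 w :
  kempe_swap_spec c e p q v2 -> kempe_swap_spec d e r s v3 ->
  c w = d w -> c w != e w -> [:: p; q] =i [:: r; s].
Proof.
move=> D2 D3 cdw cew; have dew : d w != e w by rewrite -cdw.
have [cw ew] := kempe_swap_spec_colour D2 cew.
have [dw ew'] := kempe_swap_spec_colour D3 dew.
by apply: (eq_pair_of_mem2 dew); rewrite // -cdw.
Qed.

Section Triangle.
Variables (c d e : {ffun V -> 'I_k}) (i j p q r s : 'I_k) (v1 v2 v3 : V).
Hypotheses (D1 : kempe_swap_spec c d i j v1) (D2 : kempe_swap_spec c e p q v2)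
  (D3 : kempe_swap_spec d e r s v3).

(* A vertex w moved by c -> e but fixed by c -> d identifies the colour pairs
   of c -> e and d -> e.  Either some vertex moved by c -> d is fixed by c -> e,
   and then all three pairs agree and the component of d -> e meets both
   others; or every vertex moved by c -> d is moved by c -> e, and v1
   identifies the pairs of c -> d and c -> e.  Both ways the two supports are
   the same component of c, which w contradicts. *)
Lemma kempe_triangle_support_sub w : c w != e w -> c w != d w.
Proof.
move=> cew; apply/negP=> /eqP cdw.
have pqrs := kempe_swap_pairs_eq D2 D3 cdw cew.
case: (D1) => _ supp1 col1; case: (D2) => _ supp2 _; case: (D3) => _ supp3 _.
suff E : kempe_comp c i j v1 = kempe_comp c p q v2.
  by move: cew; rewrite supp2 -E -supp1 cdw eqxx.
have [w1 /andP [cdw1 /eqP cew1] | D12] :=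
  pickP [pred x | (c x != d x) && (c x == e x)].
  have ijrs := kempe_swap_pairs_eq D1 (kempe_swap_spec_sym D3) cew1 cdw1.
  have in3 x : d x != e x -> x \in kempe_comp c r s v3.
    rewrite supp3 (@eq_kempe_comp d c r s r s) // => y.
    by rewrite -!ijrs col1.
  rewrite (kempe_comp_pair _ _ ijrs) (kempe_comp_pair _ _ pqrs).
  have -> : kempe_comp c r s v1 = kempe_comp c r s v3.
    apply: (kempe_comp_eq (w := w1)); last by rewrite in3 // -cew1 eq_sym.
    by rewrite -(kempe_comp_pair _ _ ijrs) -supp1.
  apply: (kempe_comp_eq (w := w)); first by rewrite in3 // -cdw.
  by rewrite -(kempe_comp_pair _ _ pqrs) -supp2.
have cev1 : c v1 != e v1.
  by have := D12 v1; rewrite /= (kempe_swap_spec_neq D1) => /negbT.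
have ijpq : [:: i; j] =i [:: p; q].
  have [cv1' dv1] := kempe_swap_spec_colour D1 (kempe_swap_spec_neq D1).
  apply: (eq_pair_of_mem2 (kempe_swap_spec_neq D1)) => //.
    by case: (kempe_swap_spec_colour D2 cev1).
  have [->|dev1] := eqVneq (d v1) (e v1); first by case: (kempe_swap_spec_colour D2 cev1).
  by rewrite pqrs; case: (kempe_swap_spec_colour D3 dev1).
rewrite (kempe_comp_pair _ _ ijpq).
by apply: (kempe_comp_eq (w := v1)); rewrite ?kempe_comp_id // -supp2.
Qed.

End Triangle.

Lemma kempe_triangle_support c d e i j p q r s v1 v2 v3 :
  kempe_swap_spec c d i j v1 -> kempe_swap_spec c e p q v2 ->
  kempe_swap_spec d e r s v3 -> forall w, (c w != d w) = (c w != e w).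
Proof.
move=> D1 D2 D3 w; apply/idP/idP.
  exact: (kempe_triangle_support_sub D2 D1 (kempe_swap_spec_sym D3)).
exact: (kempe_triangle_support_sub D1 D2 D3).
Qed.

Lemma kempe_swaps_eq c d e i j p q v1 v2 x y : Defs.proper c ->
  kempe_swap_spec c d i j v1 -> kempe_swap_spec c e p q v2 ->
  (forall w, (c w != d w) = (c w != e w)) ->
  adj x y -> c x != d x -> c y != d y -> d = e.
Proof.
move=> pc D1 D2 S xy cdx cdy.
have [cx _] := kempe_swap_spec_colour D1 cdx.
have [cy _] := kempe_swap_spec_colour D1 cdy.
have [cx' _] := kempe_swap_spec_colour D2 (etrans (esym (S x)) cdx).
have [cy' _] := kempe_swap_spec_colour D2 (etrans (esym (S y)) cdy).
have ijpq := eq_pair_of_mem2 (proper_adj pc xy) cx cy cx' cy'.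
apply/ffunP=> w; have [cdw|cdw] := eqVneq (c w) (d w).
  by apply/eqP; move: (S w); rewrite cdw eqxx => /esym/negbFE.
have [cw dw] := kempe_swap_spec_colour D1 cdw.
have cew : c w != e w by rewrite -S.
have [_ ew] := kempe_swap_spec_colour D2 cew.
by apply: (pair_other_uniq dw _ cw); rewrite 1?ijpq // eq_sym.
Qed.

Definition differ_at c d v := forall w, (c w != d w) = (w == v).

Lemma differ_at_neq c d v : differ_at c d v -> c v != d v.
Proof. by move->; rewrite eqxx. Qed.

Lemma differ_atE c d v w : differ_at c d v -> w != v -> c w = d w.
Proof. by move=> D; rewrite -D => /negbNE/eqP. Qed.

Lemma differ_at_uniq c d v w : differ_at c d v -> differ_at c d w -> v = w.
Proof. by move=> Dv Dw; apply/eqP; rewrite -Dw Dv eqxx. Qed.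

Lemma differ_at_trans c d e v :
  differ_at c d v -> differ_at c e v -> d != e -> differ_at d e v.
Proof.
move=> Dd De de w; have [->|wv] := eqVneq w v.
  apply: contraNneq de => dev; apply/eqP/ffunP=> x.
  by have [->//|xv] := eqVneq x v; rewrite -(differ_atE Dd xv) (differ_atE De xv).
by rewrite -(differ_atE Dd wv) (differ_atE De wv) eqxx.
Qed.

Lemma kempe_triangle_differ_at c d e i j p q r s v1 v2 v3 : Defs.proper c ->
  kempe_swap_spec c d i j v1 -> kempe_swap_spec c e p q v2 ->
  kempe_swap_spec d e r s v3 -> d != e ->
  differ_at c d v1 /\ differ_at c e v1.
Proof.
move=> pc D1 D2 D3 de; have S := kempe_triangle_support D1 D2 D3.
have Dd : differ_at c d v1.
  case: (D1) => _ supp1 _ w; rewrite supp1.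
  have [->|wv] := eqVneq w v1; first exact: kempe_comp_id.
  apply/negP=> /kempe_comp_neighbour /(_ wv) [y yv1 v1y].
  case/eqP: de; apply: (kempe_swaps_eq pc D1 D2 S v1y).
    exact: kempe_swap_spec_neq D1.
  by rewrite supp1.
by split=> // w; rewrite -S.
Qed.

Lemma kempe_step_differ_at c d v : Defs.proper c -> Defs.proper d ->
  differ_at c d v -> kempe_step c d.
Proof.
move=> pc pd D; exists (c v), (d v), v; split; rewrite ?inE ?eqxx ?differ_at_neq //.
have comp_v w : w \in kempe_comp c (c v) (d v) v -> w = v.
  move=> win; apply/eqP/contraT => wv.
  have [y yin vy] := kempe_comp_neighbour win wv.
  have := kempe_comp_colour _ yin; rewrite !inE eqxx => /(_ isT).
  rewrite eq_sym (negbTE (proper_adj pc vy)) => /eqP cy.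
  have yv : y != v by rewrite eq_sym adj_neq.
  by move: (proper_adj pd vy); rewrite -cy (differ_atE D yv) eqxx.
apply/ffunP=> w; rewrite ffunE; have [->|wv] := eqVneq w v.
  by rewrite kempe_comp_id eqxx.
by case: ifP => [/comp_v/eqP|_]; rewrite ?(negbTE wv) // (differ_atE D).
Qed.

End KempeSwaps.

Section KempeGraph.
Variables (G : graph) (k : nat).
Local Notation V := (vert G).
Local Notation colouring := (colouring G k).
Implicit Types (c d e x t : colouring) (u v w : V) (a b : 'I_k).

Lemma kempe_adj_neq c d : kempe_adj c d -> val c != val d.
Proof. by case=> cd _; apply: contra cd => /eqP/val_inj->. Qed.

Lemma kempe_adj_spec c d : kempe_adj c d ->
  exists i j v, kempe_swap_spec (val c) (val d) i j v.
Proof.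
case=> _ [/kempe_step_spec // | /kempe_step_spec [i [j [v D]]]].
by exists i, j, v; apply: kempe_swap_spec_sym.
Qed.

Lemma kempe_adj_differ_at c d v : differ_at (val c) (val d) v -> kempe_adj c d.
Proof.
move=> D; split; last by left; apply: kempe_step_differ_at (valP c) (valP d) D.
by apply: contraNneq (differ_at_neq D) => ->.
Qed.

Lemma kempe_triangle c d e : kempe_adj c d -> kempe_adj c e -> kempe_adj d e ->
  exists v, differ_at (val c) (val d) v /\ differ_at (val c) (val e) v.
Proof.
move=> /kempe_adj_spec [i [j [v D1]]] /kempe_adj_spec [p [q [v2 D2]]] de.
have [r [s [v3 D3]]] := kempe_adj_spec de.
by exists v; apply: kempe_triangle_differ_at (valP c) D1 D2 D3 (kempe_adj_neq de).
Qed.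

Definition recolour (c : {ffun V -> 'I_k}) v a : {ffun V -> 'I_k} :=
  [ffun w => if w == v then a else c w].

Definition free_at (c : {ffun V -> 'I_k}) v a := forall w, adj v w -> c w != a.

Lemma recolour_proper (c : {ffun V -> 'I_k}) v a :
  Defs.proper c -> free_at c v a -> Defs.proper (recolour c v a).
Proof.
move=> pc fa; apply/forallP=> x; apply/forallP=> y; apply/implyP=> xy.
rewrite !ffunE; have [xv|xv] := eqVneq x v; have [yv|yv] := eqVneq y v.
- by move: xy; rewrite xv yv (@adj_irr G).
- by rewrite eq_sym fa // -xv.
- by rewrite fa // -yv (@adj_sym G).
- exact: proper_adj.
Qed.

Lemma differ_at_recolour (c : {ffun V -> 'I_k}) v a :
  c v != a -> differ_at c (recolour c v a) v.
Proof. by move=> ca w; rewrite ffunE; have [->|_] := eqVneq w v; rewrite ?eqxx. Qed.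

Lemma eq_free_at (c d : {ffun V -> 'I_k}) v a :
  (forall w, adj v w -> c w = d w) -> free_at c v a -> free_at d v a.
Proof. by move=> cd fa w vw; rewrite -cd ?fa. Qed.

Lemma differ_at_recolour_adj_eq (c z : {ffun V -> 'I_k}) u v a w1 w2 :
  Defs.proper z -> (forall w, c w != a) -> adj u v ->
  differ_at (recolour c u a) z w1 -> differ_at (recolour c v a) z w2 -> z = c.
Proof.
move=> pz ca uv D1 D2; have uv' := adj_neq uv; have vu' : v != u by rewrite eq_sym.
have hu : (u == w1) || (u == w2).
  apply: contraT => /norP [uw1 uw2].
  have e1 := differ_atE D1 uw1; have e2 := differ_atE D2 uw2.
  rewrite !ffunE eqxx (negbTE uv') in e1 e2.
  by move: (ca u); rewrite e2 -e1 eqxx.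
have hv : (v == w1) || (v == w2).
  apply: contraT => /norP [vw1 vw2].
  have e1 := differ_atE D1 vw1; have e2 := differ_atE D2 vw2.
  rewrite !ffunE eqxx (negbTE vu') in e1 e2.
  by move: (ca v); rewrite e1 -e2 eqxx.
case/orP: hu => /eqP uw.
  rewrite -uw (negbTE vu') /= in hv; apply/ffunP=> w.
  have [->|wu] := eqVneq w u.
    by rewrite -(differ_atE D2) ?ffunE ?(negbTE uv') // -(eqP hv).
  by rewrite -(differ_atE D1) ?ffunE ?(negbTE wu) // -uw.
rewrite -uw (negbTE vu') orbF in hv.
move: (proper_adj pz uv); rewrite -(differ_atE D1) -?(eqP hv) //.
by rewrite -(differ_atE D2) -?uw // !ffunE !eqxx.
Qed.

Definition in_triangle c x := kempe_adj c x /\ exists t, kempe_adj c t /\ kempe_adj x t.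

Lemma in_triangle_third_colour c x : in_triangle c x ->
  exists v b, [/\ differ_at (val c) (val x) v, b != val c v, b != val x v &
                  free_at (val c) v b].
Proof.
case=> cx [t [ct xt]]; have [v [Dx Dt]] := kempe_triangle cx ct xt.
exists v, (val t v); split=> //.
- by rewrite eq_sym differ_at_neq.
- by rewrite eq_sym; apply: differ_at_neq (differ_at_trans Dx Dt (kempe_adj_neq xt)).
- move=> w vw; have wv : w != v by rewrite eq_sym adj_neq.
  rewrite (differ_atE Dt wv) eq_sym; exact: proper_adj (valP t) vw.
Qed.

Lemma in_triangle_of_third_colour c x v b : differ_at (val c) (val x) v ->
  b != val c v -> b != val x v -> free_at (val c) v b -> in_triangle c x.
Proof.
move=> D bc bx fb.
pose t : colouring := Sub _ (recolour_proper (valP c) fb).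
have Dt : differ_at (val c) (val t) v by apply: differ_at_recolour; rewrite eq_sym.
split; first exact: kempe_adj_differ_at D.
exists t; split; first exact: kempe_adj_differ_at Dt.
apply: (kempe_adj_differ_at (v := v)); apply: differ_at_trans D Dt _.
by apply: contra bx => /eqP->; rewrite /= ffunE eqxx.
Qed.

Lemma square_completion (B X Y : colouring) u v : u != v -> ~~ adj u v ->
  differ_at (val B) (val X) u -> differ_at (val B) (val Y) v ->
  exists Z : colouring, [/\ differ_at (val X) (val Z) v, val Z v = val Y v,
                            differ_at (val Y) (val Z) u & val Z u = val X u].
Proof.
move=> uv nuv DX DY; have vu : v != u by rewrite eq_sym.
have XY w : w != u -> w != v -> val X w = val Y w.
  by move=> wu wv; rewrite -(differ_atE DX wu) (differ_atE DY wv).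
have fr : free_at (val X) v (val Y v).
  move=> w vw; have wv : w != v by rewrite eq_sym adj_neq.
  rewrite XY ?(neq_of_nonadj nuv vw) // eq_sym; exact: proper_adj (valP Y) vw.
pose Z : colouring := Sub _ (recolour_proper (valP X) fr).
have ZE : val Z = recolour (val Y) u (val X u).
  apply/ffunP=> w; rewrite !ffunE; have [->|wv] := eqVneq w v.
    by rewrite (negbTE vu).
  by have [->|wu] := eqVneq w u; last rewrite XY.
exists Z; split.
- by apply: differ_at_recolour; rewrite -(differ_atE DX vu) differ_at_neq.
- by rewrite /= ffunE eqxx.
- by rewrite ZE; apply: differ_at_recolour; rewrite -(differ_atE DY uv) differ_at_neq.
- by rewrite ZE ffunE eqxx.
Qed.

Lemma in_triangle_corner (B X Y Z : colouring) u v : u != v -> ~~ adj u v ->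
  differ_at (val B) (val X) u -> in_triangle B Y -> differ_at (val B) (val Y) v ->
  differ_at (val X) (val Z) v -> val Z v = val Y v -> in_triangle X Z.
Proof.
move=> uv nuv DX /in_triangle_third_colour [v' [b [DY' bB bY fb]]] DY DZ ZY.
have vv' := differ_at_uniq DY DY'; subst v'.
have vu : v != u by rewrite eq_sym.
apply: (in_triangle_of_third_colour DZ (b := b)).
- by rewrite -(differ_atE DX vu).
- by rewrite ZY.
- by apply: eq_free_at fb => w vw; rewrite (differ_atE DX) ?(neq_of_nonadj nuv vw).
Qed.

End KempeGraph.

Section KempeIsoEmbedding.
Variables (G G' : graph) (k k' : nat).
Variables (f : colouring G k -> colouring G' k') (g : colouring G' k' -> colouring G k).
Hypotheses (fK : cancel f g) (gK : cancel g f)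
  (f_adj : forall c d, kempe_adj c d <-> kempe_adj (f c) (f d)).
Variables (c0 : {ffun vert G -> 'I_k}) (a0 a1 : 'I_k).
Hypotheses (c0_proper : Defs.proper c0) (a0_a1 : a0 != a1)
  (c0_a0 : forall w, c0 w != a0) (c0_a1 : forall w, c0 w != a1).

Let base : colouring G k := Sub c0 c0_proper.
Let mark v : colouring G k :=
  Sub (recolour c0 v a0) (recolour_proper c0_proper (fun w _ => c0_a0 w)).

Lemma in_triangle_kempe_iso c x : in_triangle (f c) (f x) <-> in_triangle c x.
Proof.
split=> [[cx [t [ct xt]]] | [cx [t [ct xt]]]].
  by split; [apply/f_adj | exists (g t); split; apply/f_adj; rewrite gK].
by split; [apply/f_adj | exists (f t); split; apply/f_adj].
Qed.

Lemma differ_at_mark v : differ_at (val base) (val (mark v)) v.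
Proof. exact: differ_at_recolour. Qed.

Lemma in_triangle_mark v : in_triangle base (mark v).
Proof.
apply: (in_triangle_of_third_colour (differ_at_mark v) (b := a1)) => //=.
- by rewrite eq_sym.
- by rewrite ffunE eqxx eq_sym.
Qed.

Lemma vertex_map_spec v : exists w, differ_at (val (f base)) (val (f (mark v))) w.
Proof.
have /in_triangle_kempe_iso/in_triangle_third_colour := in_triangle_mark v.
by case=> w [b [D _ _ _]]; exists w.
Qed.

Section VertexMap.
Variable vertex_map : vert G -> vert G'.
Hypothesis vertex_mapP :
  forall v, differ_at (val (f base)) (val (f (mark v))) (vertex_map v).

Lemma vertex_map_inj : injective vertex_map.
Proof.
move=> u v E; apply/eqP/contraT => uv.
have mark_neq : val (f (mark u)) != val (f (mark v)).
  apply: contra uv => /eqP/val_inj/(can_inj fK) muv.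
  apply/eqP/(differ_at_uniq _ (differ_at_mark v)).
  by rewrite -muv; apply: differ_at_mark.
have /f_adj uv_adj : kempe_adj (f (mark u)) (f (mark v)).
  apply: (kempe_adj_differ_at (v := vertex_map u)).
  by apply: differ_at_trans (vertex_mapP u) _ mark_neq; rewrite E; apply: vertex_mapP.
have [w [Du Dv]] := kempe_triangle (in_triangle_mark u).1 (in_triangle_mark v).1 uv_adj.
by move: uv; rewrite (differ_at_uniq (differ_at_mark u) Du)
  (differ_at_uniq (differ_at_mark v) Dv) eqxx.
Qed.

Lemma vertex_map_adj u v : adj u v -> adj (vertex_map u) (vertex_map v).
Proof.
move=> uv; apply: contraT => nuv'.
have uv' : vertex_map u != vertex_map v by rewrite (inj_eq vertex_map_inj) adj_neq.
have vu' : vertex_map v != vertex_map u by rewrite eq_sym.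
have nvu' : ~~ adj (vertex_map v) (vertex_map u) by rewrite (@adj_sym G').
have [Z [XZ ZY YZ ZX]] := square_completion uv' nuv' (vertex_mapP u) (vertex_mapP v).
have /in_triangle_kempe_iso tu : in_triangle (f (mark u)) (f (g Z)).
  rewrite gK; apply: in_triangle_corner uv' nuv' (vertex_mapP u) _ (vertex_mapP v) XZ ZY.
  exact/in_triangle_kempe_iso/in_triangle_mark.
have /in_triangle_kempe_iso tv : in_triangle (f (mark v)) (f (g Z)).
  rewrite gK; apply: in_triangle_corner vu' nvu' (vertex_mapP v) _ (vertex_mapP u) YZ ZX.
  exact/in_triangle_kempe_iso/in_triangle_mark.
have [w1 [_ [D1 _ _ _]]] := in_triangle_third_colour tu.
have [w2 [_ [D2 _ _ _]]] := in_triangle_third_colour tv.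
have gZ : g Z = base.
  exact/val_inj/(differ_at_recolour_adj_eq (valP (g Z)) c0_a0 uv D1 D2).
by move: (differ_at_neq (vertex_mapP u)); rewrite -ZX -gZ gK eqxx.
Qed.

End VertexMap.

Lemma kempe_iso_embedding :
  exists phi : vert G -> vert G', injective phi /\ {homo phi : u v / adj u v}.
Proof.
have [phi phiP] := fin_all_exists vertex_map_spec.
by exists phi; split; [apply: vertex_map_inj | apply: vertex_map_adj].
Qed.

End KempeIsoEmbedding.

Lemma colouring_avoiding_two_colours (G : graph) k : chromatic_number G + 1 < k ->
  exists (c0 : {ffun vert G -> 'I_k}) (a0 a1 : 'I_k),
    [/\ Defs.proper c0, a0 != a1, forall w, c0 w != a0 & forall w, c0 w != a1].
Proof.
rewrite /chromatic_number addn1; case: ex_minnP => m /existsP [cm pcm] _ mk.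
have m0k : m < k by apply: ltnW.
have m_le_k : m <= k by apply: ltnW.
exists [ffun w => widen_ord m_le_k (cm w)], (Ordinal m0k), (Ordinal mk); split.
- apply/forallP=> x; apply/forallP=> y; apply/implyP=> xy; rewrite !ffunE.
  by rewrite -val_eqE /= val_eqE proper_adj.
- by rewrite -val_eqE /= ltn_eqF.
- by move=> w; rewrite ffunE -val_eqE /= ltn_eqF.
- by move=> w; rewrite ffunE -val_eqE /= (ltn_eqF (leqW (ltn_ord _))).
Qed.

Lemma kempe_graph_iso_sym (G G' : graph) k k' :
  kempe_graph_iso G k G' k' -> kempe_graph_iso G' k' G k.
Proof.
case=> f [[g fK gK] f_adj]; exists g; split; first by exists f.
by move=> c d; split=> [h | /f_adj]; [apply/f_adj; rewrite !gK | rewrite !gK].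
Qed.

Lemma kempe_graph_iso_embedding (G G' : graph) k k' :
  chromatic_number G + 1 < k -> kempe_graph_iso G k G' k' ->
  exists phi : vert G -> vert G', injective phi /\ {homo phi : u v / adj u v}.
Proof.
case/colouring_avoiding_two_colours=> c0 [a0 [a1 [pc0 a01 c0a0 c0a1]]].
case=> f [[g fK gK] f_adj].
exact: (kempe_iso_embedding fK gK f_adj pc0 a01 c0a0 c0a1).
Qed.

Lemma graph_iso_of_injective_homs (G G' : graph)
    (phi : vert G -> vert G') (psi : vert G' -> vert G) :
  injective phi -> injective psi ->
  {homo phi : u v / adj u v} -> {homo psi : u v / adj u v} -> graph_iso G G'.
Proof.
move=> phi_inj psi_inj phi_hom psi_hom.
pose E (H : graph) := [set e : vert H * vert H | adj e.1 e.2].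
pose phi2 e := (phi e.1, phi e.2); pose psi2 e := (psi e.1, psi e.2).
have phi2_inj : injective phi2 by move=> [a b] [a' b'] /= [/phi_inj-> /phi_inj->].
have psi2_inj : injective psi2 by move=> [a b] [a' b'] /= [/psi_inj-> /psi_inj->].
have phiE : phi2 @: E G \subset E G'.
  by apply/subsetP=> x /imsetP [e]; rewrite !inE => /phi_hom h ->.
have psiE : psi2 @: E G' \subset E G.
  by apply/subsetP=> x /imsetP [e]; rewrite !inE => /psi_hom h ->.
have phiE_eq : phi2 @: E G = E G'.
  apply/eqP; rewrite eqEcard phiE (card_imset _ phi2_inj).
  by rewrite -(card_imset _ psi2_inj) subset_leq_card.
exists phi; split; first by apply: inj_card_bij phi_inj _; apply: leq_card psi_inj.
move=> x y; apply/idP/idP=> [/phi_hom // | xy'].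
have : (phi x, phi y) \in E G' by rewrite inE.
by rewrite -phiE_eq => /imsetP [[a b]]; rewrite inE => ab [/phi_inj-> /phi_inj->].
Qed.

Unset Implicit Arguments.

Theorem theorem1p5 (G G' : graph) (k k' : nat) :
  chromatic_number G + 1 < k ->
  chromatic_number G' + 1 < k' ->
  kempe_graph_iso G k G' k' ->
  graph_iso G G'.
Proof.
move=> hk hk' iso.
have [phi [phi_inj phi_hom]] := kempe_graph_iso_embedding hk iso.
have [psi [psi_inj psi_hom]] := kempe_graph_iso_embedding hk' (kempe_graph_iso_sym iso).
exact: graph_iso_of_injective_homs phi_inj psi_inj phi_hom psi_hom.
Qed.
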